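(* Let $L$ be a finite-dimensional nilpotent Lie superalgebra over $\mathbb{F}$ with $\dim L=(k\mid l)$ and $\dim L'=(r\mid s)$ where $r+s=1$. Then $L$ is capable if and only if either $L\cong H(1,0)\oplus A(k-3\mid l)$ or $L\cong H_{1}\oplus A(k-1\mid l-2)$.
   Context: All algebras are over a field $\mathbb{F}$ of characteristic $\neq 2,3$. A Lie superalgebra is $L=L_{\bar 0}\oplus L_{\bar 1}$ with a graded, graded skew-symmetric bracket satisfying the graded Jacobi identity; $\dim L=(m\mid n)$ means $\dim L_{\bar 0}=m$, $\dim L_{\bar 1}=n$. $L'=[L,L]$, $Z(L)$ is the center. A Lie superalgebra $L$ is capable if $L\cong H/Z(H)$ for some Lie superalgebra $H$. $A(m\mid n)$ denotes the abelian Lie superalgebra of dimension $(m\mid n)$. $H(m,n)$ ($m+n\ge 1$) is the Lie superalgebra with even basis $x_1,\dots,x_{2m},z$, odd basis $y_1,\dots,y_n$, and nonzero brackets $[x_i,x_{m+i}]=z$ ($1\le i\le m$), $[y_j,y_j]=z$ ($1\le j\le n$); it has dimension $(2m+1\mid n)$. $H_m$ ($m\ge1$) is the Lie superalgebra with even basis $x_1,\dots,x_m$, odd basis $y_1,\dots,y_m,z$, and nonzero brackets $[x_j,y_j]=z$ ($1\le j\le m$); it has dimension $(m\mid m+1)$. $\oplus$ denotes direct sum of Lie superalgebras. *)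

From HB Require Import structures.
From mathcomp Require Import all_boot all_order all_algebra.
Set Implicit Arguments. Unset Strict Implicit. Unset Printing Implicit Defensive.
Import GRing.Theory.
Local Open Scope ring_scope.

Section LieSuper.
Variable F : fieldType.

(* A Lie superalgebra L = L0 (+) L1 with even part V0 and odd part V1.
   br00 : [even, even], br01 : [even, odd] (with [odd, even] y x := - br01 x y),
   br11 : [odd, odd]. *)
Record liesuper (V0 V1 : lmodType F) := LieSuper {
  br00 : V0 -> V0 -> V0;
  br01 : V0 -> V1 -> V1;
  br11 : V1 -> V1 -> V0 }.

Definition lin (U V : lmodType F) (f : U -> V) : Prop :=
  forall (a : F) (u v : U), f (a *: u + v) = a *: f u + f v.

Definition is_liesuper (V0 V1 : lmodType F) (L : liesuper V0 V1) : Prop :=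
  (forall x, lin (br00 L x)) /\ (forall x, lin (fun x' => br00 L x' x)) /\
  (forall x, lin (br01 L x)) /\ (forall y, lin (fun x => br01 L x y)) /\
  (forall y, lin (br11 L y)) /\ (forall y, lin (fun y' => br11 L y' y)) /\
  (forall x x', br00 L x x' = - br00 L x' x) /\
  (forall y y', br11 L y y' = br11 L y' y) /\
  (forall x y z : V0,
     br00 L x (br00 L y z) = br00 L (br00 L x y) z + br00 L y (br00 L x z)) /\
  (forall (x y : V0) (z : V1),
     br01 L x (br01 L y z) = br01 L (br00 L x y) z + br01 L y (br01 L x z)) /\
  (forall (x : V0) (y z : V1),
     br00 L x (br11 L y z) = br11 L (br01 L x y) z + br11 L y (br01 L x z)) /\
  (forall y z w : V1,
     br01 L (br11 L y z) w + br01 L (br11 L z w) y + br01 L (br11 L w y) z = 0).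

Definition brp (V0 V1 : lmodType F) (L : liesuper V0 V1)
    (a b : V0 * V1) : V0 * V1 :=
  (br00 L a.1 b.1 + br11 L a.2 b.2, br01 L a.1 b.2 - br01 L b.1 a.2).

(* Nilpotent: L^{n+1} = 0 for some n, i.e. all left-normed brackets
   [..[[x0,x1],x2],..,xn] of length n+1 vanish. *)
Definition nilpotent (V0 V1 : lmodType F) (L : liesuper V0 V1) : Prop :=
  exists n : nat, forall (x : V0 * V1) (xs : seq (V0 * V1)),
    size xs = n -> foldl (brp L) x xs = (0, 0).

Definition is_derived (V0 V1 : vectType F) (L : liesuper V0 V1)
    (D0 : {vspace V0}) (D1 : {vspace V1}) : Prop :=
  let contains (U0 : {vspace V0}) (U1 : {vspace V1}) :=
    (forall x x' : V0, br00 L x x' \in U0) /\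
    (forall y y' : V1, br11 L y y' \in U0) /\
    (forall (x : V0) (y : V1), br01 L x y \in U1) in
  contains D0 D1 /\
  (forall U0 U1, contains U0 U1 -> (D0 <= U0)%VS /\ (D1 <= U1)%VS).

Definition is_hom (W0 W1 V0 V1 : lmodType F) (H : liesuper W0 W1)
    (L : liesuper V0 V1) (f0 : W0 -> V0) (f1 : W1 -> V1) : Prop :=
  lin f0 /\ lin f1 /\
  (forall x x', f0 (br00 H x x') = br00 L (f0 x) (f0 x')) /\
  (forall x y, f1 (br01 H x y) = br01 L (f0 x) (f1 y)) /\
  (forall y y', f0 (br11 H y y') = br11 L (f1 y) (f1 y')).

Definition isomorphic (W0 W1 V0 V1 : lmodType F) (H : liesuper W0 W1)
    (L : liesuper V0 V1) : Prop :=
  exists (f0 : W0 -> V0) (f1 : W1 -> V1),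
    is_hom H L f0 f1 /\ bijective f0 /\ bijective f1.

Definition in_center0 (W0 W1 : lmodType F) (H : liesuper W0 W1) (w : W0) :=
  (forall x, br00 H w x = 0) /\ (forall y, br01 H w y = 0).
Definition in_center1 (W0 W1 : lmodType F) (H : liesuper W0 W1) (w : W1) :=
  (forall x, br01 H x w = 0) /\ (forall y, br11 H w y = 0).

(* L is capable iff L ~= H / Z(H) for some Lie superalgebra H over F, i.e.
   (first isomorphism theorem) there is a surjective homomorphism H -> L
   whose kernel is exactly Z(H). *)
Definition capable (V0 V1 : lmodType F) (L : liesuper V0 V1) : Prop :=
  exists (W0 W1 : lmodType F) (H : liesuper W0 W1), is_liesuper H /\
  exists (f0 : W0 -> V0) (f1 : W1 -> V1),
    is_hom H L f0 f1 /\
    (forall v, exists w, f0 w = v) /\ (forall v, exists w, f1 w = v) /\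
    (forall w, f0 w = 0 <-> in_center0 H w) /\
    (forall w, f1 w = 0 <-> in_center1 H w).

Definition dsum (V0 V1 W0 W1 : lmodType F) (L : liesuper V0 V1)
    (M : liesuper W0 W1) : liesuper (V0 * W0)%type (V1 * W1)%type :=
  LieSuper (fun a b => (br00 L a.1 b.1, br00 M a.2 b.2))
           (fun a b => (br01 L a.1 b.1, br01 M a.2 b.2))
           (fun a b => (br11 L a.1 b.1, br11 M a.2 b.2)).

Definition Aab (m n : nat) : liesuper 'rV[F]_m 'rV[F]_n :=
  LieSuper (fun _ _ => 0) (fun _ _ => 0) (fun _ _ => 0).

(* H(m,n): even basis x_1..x_{2m}, z (coordinates 'I_(m+m+1), with
   x_i = lshift (lshift i), x_{m+i} = lshift (rshift i), z = last);
   odd basis y_1..y_n; [x_i,x_{m+i}] = z, [y_j,y_j] = z. *)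
Definition Hx (m : nat) (i : 'I_m) : 'I_(m + m + 1) := lshift 1 (lshift m i).
Definition Hxm (m : nat) (i : 'I_m) : 'I_(m + m + 1) := lshift 1 (rshift m i).
Definition Hz (m : nat) : 'I_(m + m + 1) := rshift (m + m) (@ord0 0).

Definition Heis (m n : nat) : liesuper 'rV[F]_(m + m + 1) 'rV[F]_n :=
  LieSuper
    (fun u v : 'rV[F]_(m + m + 1) => (\sum_(i < m) (u ord0 (Hx i) * v ord0 (Hxm i)
                              - u ord0 (Hxm i) * v ord0 (Hx i)))
                *: delta_mx ord0 (Hz m))
    (fun _ _ => 0)
    (fun y y' : 'rV[F]_n => (\sum_(j < n) y ord0 j * y' ord0 j) *: delta_mx ord0 (Hz m)).

(* H_m: even basis x_1..x_m, odd basis y_1..y_m, z (coordinates 'I_(m+1),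
   y_j = lshift j, z = last); [x_j, y_j] = z. *)
Definition Hm (m : nat) : liesuper 'rV[F]_m 'rV[F]_(m + 1) :=
  LieSuper
    (fun _ _ => 0)
    (fun (u : 'rV[F]_m) (w : 'rV[F]_(m + 1)) => (\sum_(j < m) u ord0 j * w ord0 (lshift 1 j))
                *: delta_mx ord0 (rshift m (@ord0 0)))
    (fun _ _ => 0).

End LieSuper.

From HB Require Import structures.
From mathcomp Require Import all_boot all_algebra.
From mathcomp Require Import ring.
From Stdlib Require Import Classical.
Import GRing.Theory.
Local Open Scope ring_scope.
Set Implicit Arguments. Unset Strict Implicit.

(* Write [L' = F z].  In a central cover [g : H -> L] with kernel [Z(H)], every bracket
   of [H] depends only on the images in [L], and the Jacobi identities of [H] make the lift
   of [z] central unless the structure constants of [L] satisfy quadratic relations.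
   If [z] is even, [[y, y] = 0] for odd [y] (char <> 3), so the odd part is abelian
   (char <> 2), and the even form [om] with [[x, x'] = om x x' z] satisfies the Plücker
   relations, i.e. has rank 2.  If [z] is odd, the 2x2 minors of the pairing [L0 x L1 -> F z]
   vanish (char <> 2), so it has rank 1.  Nilpotency puts [z] in the radical of these forms,
   and dual bases identify [L] with [H(1,0) + A] resp. [H_1 + A].  Conversely, each of
   these is the quotient by its centre of an explicit extension by a 2-cocycle. *)

Section LinearMaps.
Variable F : fieldType.

Section Lin.
Variables (U V : lmodType F) (f : U -> V).
Hypothesis f_lin : lin f.

Lemma linD u v : f (u + v) = f u + f v.
Proof. by have := f_lin 1 u v; rewrite !scale1r. Qed.

Lemma lin0 : f 0 = 0.
Proof. by apply: (addrI (f 0)); rewrite -linD !addr0. Qed.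

Lemma linZ a u : f (a *: u) = a *: f u.
Proof. by have := f_lin a u 0; rewrite !addr0 lin0 addr0. Qed.

Lemma linN u : f (- u) = - f u.
Proof. by rewrite -scaleN1r linZ scaleN1r. Qed.

Lemma linB u v : f (u - v) = f u - f v.
Proof. by rewrite linD linN. Qed.

Lemma lin_sum n (g : 'I_n -> U) : f (\sum_i g i) = \sum_i f (g i).
Proof. exact: (big_morph _ linD lin0). Qed.
End Lin.

Definition flin (U : lmodType F) (g : U -> F) := lin (g : U -> F^o).

Section Flin.
Variables (U : lmodType F) (g : U -> F).
Hypothesis g_lin : flin g.

Lemma flinD u v : g (u + v) = g u + g v. Proof. exact: (linD g_lin). Qed.
Lemma flin0 : g 0 = 0. Proof. exact: (lin0 g_lin). Qed.
Lemma flinZ a u : g (a *: u) = a * g u. Proof. exact: (linZ g_lin). Qed.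
Lemma flinN u : g (- u) = - g u. Proof. exact: (linN g_lin). Qed.
Lemma flin_sum n (h : 'I_n -> U) : g (\sum_i h i) = \sum_i g (h i).
Proof. exact: (lin_sum g_lin). Qed.
End Flin.

Lemma scale_nz_eq0 (V : lmodType F) (a : F) (v : V) : a != 0 -> a *: v = 0 -> v = 0.
Proof. by move=> a0 /eqP; rewrite scaler_eq0 (negPf a0) => /eqP. Qed.

Lemma scaler_subB (V : lmodType F) (u v : V) p1 p2 p3 p4 :
  p1 *: u - p2 *: v - (p3 *: u - p4 *: v) = (p1 - p3) *: u + (p4 - p2) *: v.
Proof. by rewrite !scalerBl opprB addrACA [RHS]addrACA [_ - p2 *: v]addrC. Qed.
End LinearMaps.

Section DualFamily.
Variables (F : fieldType) (V : vectType F) (m : nat).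
Variables (x : 'I_m -> V) (f : 'I_m -> V -> F).
Hypotheses (f_lin : forall i, flin (f i)) (f_dual : forall i j, f i (x j) = (i == j)%:R).

Lemma dual_coord_sum i (a : 'I_m -> F) : f i (\sum_j a j *: x j) = a i.
Proof.
rewrite flin_sum // (bigD1 i) //= big1 => [|j ji].
  by rewrite flinZ // f_dual eqxx mulr1 addr0.
by rewrite flinZ // f_dual eq_sym (negPf ji) mulr0.
Qed.

Definition dual_tuple := [tuple x j | j < m].

Lemma dual_tupleE (j : 'I_m) : dual_tuple`_j = x j.
Proof. by rewrite -tnth_nth tnth_mktuple. Qed.

Lemma free_dual_tuple : free dual_tuple.
Proof.
apply/freeP => k hk i; have := congr1 (f i) hk.
under eq_bigr do rewrite dual_tupleE.
by rewrite dual_coord_sum flin0.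
Qed.

Lemma dim_dual_span : \dim <<dual_tuple>> = m.
Proof. by rewrite (eqnP free_dual_tuple) size_tuple. Qed.

Lemma dual_family_le_dim : (m <= \dim (fullv : {vspace V}))%N.
Proof. by rewrite -{1}dim_dual_span dimvS ?subvf. Qed.

Definition dual_proj v := v - \sum_j f j v *: x j.

Lemma dual_proj_lin : lin dual_proj.
Proof.
move=> a u v; rewrite /dual_proj.
have -> : \sum_j f j (a *: u + v) *: x j
          = a *: (\sum_j f j u *: x j) + \sum_j f j v *: x j.
  rewrite scaler_sumr -big_split /=; apply: eq_bigr => j _.
  by rewrite f_lin scalerDl scalerA.
by rewrite scalerBr opprD addrACA.
Qed.

Lemma dual_coord_proj i v : f i (dual_proj v) = 0.
Proof. by rewrite (linB (f_lin i)) dual_coord_sum subrr. Qed.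

Lemma dual_proj_dual j : dual_proj (x j) = 0.
Proof.
rewrite /dual_proj (bigD1 j) //= f_dual eqxx scale1r big1 ?addr0 ?subrr // => i ij.
by rewrite f_dual (negPf ij) scale0r.
Qed.

Definition dual_kernel := <<map_tuple dual_proj (vbasis (fullv : {vspace V}))>>%VS.

Lemma dual_proj_mem v : dual_proj v \in dual_kernel.
Proof.
rewrite (coord_vbasis (memvf v)) (lin_sum dual_proj_lin).
apply: rpred_sum => i _; rewrite (linZ dual_proj_lin); apply/rpredZ/memv_span.
by apply: map_f; apply: mem_nth; rewrite size_tuple.
Qed.

Lemma dual_kernel_coord i w : w \in dual_kernel -> f i w = 0.
Proof.
move=> /coord_span ->; rewrite flin_sum //; apply: big1 => j _.
by rewrite flinZ // (nth_map 0) ?size_tuple // dual_coord_proj mulr0.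
Qed.

Lemma dual_proj_decomp v : v = \sum_j f j v *: x j + dual_proj v.
Proof. by rewrite /dual_proj addrC subrK. Qed.

Lemma dim_dual_kernel : (m + \dim dual_kernel)%N = \dim (fullv : {vspace V}).
Proof.
have sum_full : (<<dual_tuple>> + dual_kernel)%VS = fullv.
  apply/eqP; rewrite eqEsubv subvf /=; apply/subvP => v _.
  rewrite [v]dual_proj_decomp; apply: memv_add; last exact: dual_proj_mem.
  apply: rpred_sum => j _; apply/rpredZ; rewrite -dual_tupleE.
  by apply/memv_span/mem_nth; rewrite size_tuple.
have cap0 : (<<dual_tuple>> :&: dual_kernel)%VS = 0%VS.
  apply/eqP; rewrite -subv0; apply/subvP => w /memv_capP [wx wK]; rewrite memv0.
  rewrite (coord_span wx); apply/eqP/big1 => j _.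
  have := dual_kernel_coord j wK; rewrite {1}(coord_span wx).
  under eq_bigr do rewrite dual_tupleE.
  by rewrite dual_coord_sum => ->; rewrite scale0r.
by rewrite -dim_dual_span -dimv_sum_cap sum_full cap0 dimv0 addn0.
Qed.

Lemma dual_coord_iso p : (m + p)%N = \dim (fullv : {vspace V}) ->
  exists Phi : V -> 'rV[F]_m * 'rV[F]_p,
    [/\ lin Phi, bijective Phi, (forall v i, (Phi v).1 ord0 i = f i v) &
        forall j, Phi (x j) = (delta_mx ord0 j, 0)].
Proof.
rewrite -dim_dual_kernel => /addnI dimK.
have [b bK] : exists b : p.-tuple V, basis_of dual_kernel b.
  by rewrite dimK; exists (vbasis dual_kernel); apply: vbasisP.
pose Phi v := (\row_(i < m) f i v, \row_(j < p) coord b j (dual_proj v)).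
pose Psi (ac : 'rV[F]_m * 'rV[F]_p) :=
  \sum_j ac.1 ord0 j *: x j + \sum_(j < p) ac.2 ord0 j *: b`_j.
have PsiK c : \sum_(j < p) c ord0 j *: b`_j \in dual_kernel.
  by apply: rpred_sum => j _; apply/rpredZ/(basis_mem bK)/mem_nth; rewrite size_tuple.
have f_Psi a c i : f i (Psi (a, c)) = a ord0 i.
  by rewrite flinD // dual_coord_sum dual_kernel_coord ?addr0.
exists Phi; split.
- move=> a u v; congr (_, _); apply/rowP => i; rewrite !mxE ?f_lin //.
  by rewrite dual_proj_lin linearP.
- exists Psi => [v|[a c]]; rewrite /Psi /Phi /=.
    under eq_bigr do rewrite mxE.
    under [X in _ + X]eq_bigr do rewrite mxE.
    by rewrite -(coord_basis bK (dual_proj_mem v)) -dual_proj_decomp.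
  congr (_, _); apply/rowP => i; rewrite !mxE; first exact: f_Psi.
  rewrite /dual_proj -/(Psi (a, c)).
  under eq_bigr do rewrite f_Psi.
  by rewrite /Psi /= addrC addKr coord_sum_free //; apply: basis_free bK.
- by move=> v i; rewrite mxE.
- move=> j; rewrite /Phi dual_proj_dual; congr (_, _); apply/rowP => i.
    by rewrite !mxE f_dual.
  by rewrite !mxE linear0.
Qed.

Lemma dual_family_extend z : z != 0 -> (forall i, f i z = 0) ->
  exists h : V -> F, [/\ flin h, h z = 1 & forall j, h (x j) = 0].
Proof.
move=> z0 fz.
have [Phi [Phi_lin [Psi PhiK PsiK] Phi1 Phix]] :=
  dual_coord_iso (subnKC dual_family_le_dim).
have Phiz1 : (Phi z).1 = 0 by apply/rowP => i; rewrite Phi1 fz mxE.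
have [i zi] : exists i, (Phi z).2 ord0 i != 0.
  apply/existsP; apply: contraR z0; rewrite negb_exists => /forallP z2.
  apply/eqP; rewrite -(PhiK z) -(PhiK 0) (lin0 Phi_lin); congr Psi.
  apply: injective_projections; rewrite /= ?Phiz1 //.
  by apply/rowP => j; rewrite mxE; apply/eqP; rewrite -[_ == _]negbK z2.
exists (fun v => (Phi v).2 ord0 i / (Phi z).2 ord0 i); split.
- by move=> a u v; rewrite Phi_lin /= !mxE mulrDl -mulrA.
- by rewrite divff.
- by move=> j; rewrite Phix /= mxE mul0r.
Qed.
End DualFamily.

Lemma dimv0_mem (F : fieldType) (V : vectType F) (D : {vspace V}) :
  \dim D = 0%N -> forall w, w \in D -> w = 0.
Proof. by move=> /eqP; rewrite dimv_eq0 => /eqP -> w; rewrite memv0 => /eqP. Qed.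

Lemma dimv1_coord (F : fieldType) (V : vectType F) (D : {vspace V}) :
  \dim D = 1%N ->
  exists (z : V) (c : V -> F), [/\ z != 0, flin c & forall w, w \in D -> w = c w *: z].
Proof.
move=> d1; have [b bD] : exists b : 1.-tuple V, basis_of D b.
  by rewrite -d1; exists (vbasis D); apply: vbasisP.
exists b`_0, (coord b ord0); split.
- by apply: (basis_not0 bD); apply: mem_nth; rewrite size_tuple.
- by move=> a u v; rewrite linearP.
- by move=> w /(coord_basis bD) {1}->; rewrite big_ord1.
Qed.

Section Plucker.
Variables (F : fieldType) (V : lmodType F).

Definition plucker (om : V -> V -> F) a b c d :=
  om a b * om c d - om a c * om b d + om a d * om b c.

Lemma plucker_decomposable (om : V -> V -> F) u v :
  (forall w, flin (om w)) -> (forall a b, om a b = - om b a) ->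
  (forall a b c d, plucker om a b c d = 0) -> om u v != 0 ->
  exists x2, om u x2 = 1 /\ forall a b, om a b = om a x2 * om u b - om u a * om b x2.
Proof.
move=> om_lin om_skew om_plucker uv; pose x2 := (om u v)^-1 *: v.
have ux2 : om u x2 = 1 by rewrite flinZ // mulVf.
exists x2; split=> // a b; have := om_plucker a b u x2.
rewrite /plucker ux2 mulr1 (om_skew u b) (om_skew u a) => e.
by rewrite -[om a b]subr0 -e; ring.
Qed.
End Plucker.

Section LieSuperAxioms.
Variables (F : fieldType) (W0 W1 : lmodType F) (H : liesuper W0 W1).
Hypothesis HH : is_liesuper H.

Lemma lin_br00r x : lin (br00 H x). Proof. by case: HH. Qed.
Lemma lin_br00l x : lin (fun x' => br00 H x' x). Proof. by case: HH => _ []. Qed.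
Lemma lin_br01r x : lin (br01 H x). Proof. by case: HH => _ [] _ []. Qed.
Lemma lin_br01l y : lin (fun x => br01 H x y). Proof. by case: HH => _ [] _ [] _ []. Qed.
Lemma lin_br11r y : lin (br11 H y). Proof. by case: HH => _ [] _ [] _ [] _ []. Qed.
Lemma lin_br11l y : lin (fun y' => br11 H y' y).
Proof. by case: HH => _ [] _ [] _ [] _ [] _ []. Qed.

Lemma br00_skew x x' : br00 H x x' = - br00 H x' x.
Proof. by case: HH => _ [] _ [] _ [] _ [] _ [] _ [] ->. Qed.
Lemma br11_sym y y' : br11 H y y' = br11 H y' y.
Proof. by case: HH => _ [] _ [] _ [] _ [] _ [] _ [] _ [] ->. Qed.

Lemma jacobi000 x y z :
  br00 H x (br00 H y z) = br00 H (br00 H x y) z + br00 H y (br00 H x z).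
Proof. by case: HH => _ [] _ [] _ [] _ [] _ [] _ [] _ [] _ [] ->. Qed.
Lemma jacobi001 x y z :
  br01 H x (br01 H y z) = br01 H (br00 H x y) z + br01 H y (br01 H x z).
Proof. by case: HH => _ [] _ [] _ [] _ [] _ [] _ [] _ [] _ [] _ [] ->. Qed.
Lemma jacobi011 x y z :
  br00 H x (br11 H y z) = br11 H (br01 H x y) z + br11 H y (br01 H x z).
Proof. by case: HH => _ [] _ [] _ [] _ [] _ [] _ [] _ [] _ [] _ [] _ [] ->. Qed.
Lemma jacobi111 y z w :
  br01 H (br11 H y z) w + br01 H (br11 H z w) y + br01 H (br11 H w y) z = 0.
Proof. by case: HH => _ [] _ [] _ [] _ [] _ [] _ [] _ [] _ [] _ [] _ [] _ ->. Qed.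

Lemma br00Zl a x y : br00 H (a *: x) y = a *: br00 H x y. Proof. exact: (linZ (lin_br00l y)). Qed.
Lemma br00Zr a x y : br00 H x (a *: y) = a *: br00 H x y. Proof. exact: (linZ (lin_br00r x)). Qed.
Lemma br01Zl a x y : br01 H (a *: x) y = a *: br01 H x y. Proof. exact: (linZ (lin_br01l y)). Qed.
Lemma br01Zr a x y : br01 H x (a *: y) = a *: br01 H x y. Proof. exact: (linZ (lin_br01r x)). Qed.
Lemma br11Zl a x y : br11 H (a *: x) y = a *: br11 H x y. Proof. exact: (linZ (lin_br11l y)). Qed.
Lemma br11Zr a x y : br11 H x (a *: y) = a *: br11 H x y. Proof. exact: (linZ (lin_br11r x)). Qed.
Lemma br00Bl x x' y : br00 H (x - x') y = br00 H x y - br00 H x' y.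
Proof. exact: (linB (lin_br00l y)). Qed.
Lemma br01Bl x x' y : br01 H (x - x') y = br01 H x y - br01 H x' y.
Proof. exact: (linB (lin_br01l y)). Qed.
Lemma br01Br x y y' : br01 H x (y - y') = br01 H x y - br01 H x y'.
Proof. exact: (linB (lin_br01r x)). Qed.
Lemma br11Bl y y' w : br11 H (y - y') w = br11 H y w - br11 H y' w.
Proof. exact: (linB (lin_br11l w)). Qed.
Lemma br11Dl y y' w : br11 H (y + y') w = br11 H y w + br11 H y' w.
Proof. exact: (linD (lin_br11l w)). Qed.
Lemma br11Dr y y' w : br11 H w (y + y') = br11 H w y + br11 H w y'.
Proof. exact: (linD (lin_br11r w)). Qed.
Lemma br00r0 x : br00 H x 0 = 0. Proof. exact: (lin0 (lin_br00r x)). Qed.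
Lemma br01l0 y : br01 H 0 y = 0. Proof. exact: (lin0 (lin_br01l y)). Qed.
Lemma br01r0 x : br01 H x 0 = 0. Proof. exact: (lin0 (lin_br01r x)). Qed.
Lemma br11l0 y : br11 H 0 y = 0. Proof. exact: (lin0 (lin_br11l y)). Qed.
Lemma br11r0 y : br11 H y 0 = 0. Proof. exact: (lin0 (lin_br11r y)). Qed.

Lemma brpZl a e q : brp H (a *: e) q = a *: brp H e q.
Proof.
by case: e q => [e1 e2] [q1 q2]; rewrite /brp /= br00Zl br11Zl br01Zl br01Zr -scalerDr -scalerBr.
Qed.

Lemma nilpotent_eigenvalue0 e q (lam : F) :
  nilpotent H -> e != 0 -> brp H e q = lam *: e -> lam = 0.
Proof.
move=> [n nilH] e0 eq_e.
have iter_e k mu : foldl (brp H) (mu *: e) (nseq k q) = (mu * lam ^+ k) *: e.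
  elim: k mu => [|k IHk] mu /=; first by rewrite expr0 mulr1.
  by rewrite brpZl eq_e scalerA IHk exprS mulrA.
have := nilH e (nseq n q) (size_nseq _ _).
rewrite -[e in foldl _ e]scale1r iter_e mul1r => /eqP.
rewrite -[(0, 0)]/(0 : W0 * W1) scaler_eq0 (negPf e0) orbF expf_eq0.
by case/andP => _ /eqP.
Qed.
End LieSuperAxioms.

Section CentralCover.
Variables (F : fieldType) (V0 V1 W0 W1 : lmodType F).
Variables (L : liesuper V0 V1) (H : liesuper W0 W1) (g0 : W0 -> V0) (g1 : W1 -> V1).
Hypotheses (HH : is_liesuper H) (g_hom : is_hom H L g0 g1).
Hypotheses (g0_surj : forall v, exists w, g0 w = v) (g1_surj : forall v, exists w, g1 w = v).
Hypotheses (g0_ker : forall w, g0 w = 0 <-> in_center0 H w)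
           (g1_ker : forall w, g1 w = 0 <-> in_center1 H w).

Lemma g0_lin : lin g0. Proof. by case: g_hom. Qed.
Lemma g1_lin : lin g1. Proof. by case: g_hom => _ []. Qed.
Lemma g0_br00 x x' : g0 (br00 H x x') = br00 L (g0 x) (g0 x').
Proof. by case: g_hom => _ [] _ [] ->. Qed.
Lemma g1_br01 x y : g1 (br01 H x y) = br01 L (g0 x) (g1 y).
Proof. by case: g_hom => _ [] _ [] _ [] ->. Qed.
Lemma g0_br11 y y' : g0 (br11 H y y') = br11 L (g1 y) (g1 y').
Proof. by case: g_hom => _ [] _ [] _ [] _ ->. Qed.

(* Since the kernel of [g] is the centre of [H], brackets in [H] only depend on images in [L]. *)
Lemma center0_fibre w w' : g0 w = g0 w' -> in_center0 H (w - w').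
Proof. by move=> e; apply/g0_ker; rewrite (linB g0_lin) e subrr. Qed.
Lemma center1_fibre w w' : g1 w = g1 w' -> in_center1 H (w - w').
Proof. by move=> e; apply/g1_ker; rewrite (linB g1_lin) e subrr. Qed.

Lemma br00_lift_l w w' h : g0 w = g0 w' -> br00 H w h = br00 H w' h.
Proof. by move/center0_fibre => [c _]; apply/eqP; rewrite -subr_eq0 -br00Bl // c. Qed.
Lemma br00_lift_r w w' h : g0 w = g0 w' -> br00 H h w = br00 H h w'.
Proof. by move=> e; rewrite (br00_skew HH) (br00_lift_l _ e) -(br00_skew HH). Qed.
Lemma br01_lift_l w w' h : g0 w = g0 w' -> br01 H w h = br01 H w' h.
Proof. by move/center0_fibre => [_ c]; apply/eqP; rewrite -subr_eq0 -br01Bl // c. Qed.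
Lemma br01_lift_r w w' h : g1 w = g1 w' -> br01 H h w = br01 H h w'.
Proof. by move/center1_fibre => [c _]; apply/eqP; rewrite -subr_eq0 -br01Br // c. Qed.
Lemma br11_lift_l w w' h : g1 w = g1 w' -> br11 H w h = br11 H w' h.
Proof. by move/center1_fibre => [_ c]; apply/eqP; rewrite -subr_eq0 -br11Bl // c. Qed.
Lemma br11_lift_r w w' h : g1 w = g1 w' -> br11 H h w = br11 H h w'.
Proof. by move=> e; rewrite (br11_sym HH) (br11_lift_l _ e) -(br11_sym HH). Qed.

Section EvenDerived.
Variables (z : V0) (zt : W0).
Hypotheses (z0 : z != 0) (zt_lift : g0 zt = z) (br01_L0 : forall x y, br01 L x y = 0).

Lemma g1_br01_0 x y : g1 (br01 H x y) = g1 0.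
Proof. by rewrite g1_br01 br01_L0 (lin0 g1_lin). Qed.

Lemma lift_scale_z a : g0 (a *: zt) = a *: z.
Proof. by rewrite (linZ g0_lin) zt_lift. Qed.

(* Otherwise the Jacobi identities for [(y, y, h)] and [(y, y, w)] would make the
   lift of [z] central; the coefficient 3 comes from [(y, y, y)]. *)
Lemma br11_diag_coeff0 (beta : V1 -> V1 -> F) :
  (3%:R : F) != 0 -> (forall y y', br11 L y y' = beta y y' *: z) -> forall y, beta y y = 0.
Proof.
move=> h3 br11_L y; apply: contraTeq z0 => a0; rewrite negbK.
have [yt yt_lift] := g1_surj y; set a := beta y y in a0.
have g0_yw w : g0 (br11 H yt w) = g0 (beta y (g1 w) *: zt).
  by rewrite g0_br11 yt_lift br11_L lift_scale_z.
have g0_yy : g0 (br11 H yt yt) = g0 (a *: zt) by rewrite g0_yw yt_lift.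
have zt_br00 h : br00 H zt h = 0.
  apply: (scale_nz_eq0 a0); rewrite -br00Zl //.
  rewrite -(br00_lift_l _ g0_yy) (br00_skew HH) (jacobi011 HH).
  have e0 := g1_br01_0 h yt.
  by rewrite (br11_lift_l _ e0) (br11_lift_r _ e0) br11l0 // br11r0 // addr0 oppr0.
pose s := br01 H zt yt.
have zt_br01 h : a *: br01 H zt h = - ((2%:R * beta y (g1 h)) *: s).
  rewrite -br01Zl // -(br01_lift_l _ g0_yy).
  have J := jacobi111 HH yt yt h.
  rewrite (br11_sym HH h yt) (br01_lift_l _ (g0_yw h)) br01Zl // in J.
  move/eqP: J; rewrite -addrA addr_eq0 => /eqP ->.
  by rewrite -scalerDl mulr_natl mulr2n.
have s0 : s = 0.
  have := zt_br01 yt; rewrite yt_lift -/a -/s => /eqP.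
  rewrite -subr_eq0 opprK -scalerDl scaler_eq0 => /orP [|/eqP //].
  have -> : a + 2%:R * a = 3%:R * a by ring.
  by rewrite mulf_eq0 (negPf h3) (negPf a0).
rewrite -zt_lift; apply/eqP/g0_ker; split=> // h.
by apply: (scale_nz_eq0 a0); rewrite zt_br01 s0 scaler0 oppr0.
Qed.

Section BracketForm.
Variable om : V0 -> V0 -> F.
Hypotheses (br00_L : forall x x', br00 L x x' = om x x' *: z)
  (om_skew : forall x x', om x x' = - om x' x).

Let t h := br00 H h zt.

Lemma g0_br00_lift X Y : g0 (br00 H X Y) = g0 (om (g0 X) (g0 Y) *: zt).
Proof. by rewrite g0_br00 br00_L lift_scale_z. Qed.

Lemma br00_z_jacobi X Y h :
  om (g0 X) (g0 Y) *: t h = om (g0 h) (g0 Y) *: t X - om (g0 h) (g0 X) *: t Y.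
Proof.
have J := jacobi000 HH h X Y.
rewrite (br00_lift_r _ (g0_br00_lift X Y)) (br00_lift_l _ (g0_br00_lift h X)) in J.
rewrite (br00_lift_r _ (g0_br00_lift h Y)) br00Zr // br00Zl // br00Zr // in J.
by rewrite /t J (br00_skew HH zt Y) scalerN addrC.
Qed.

Lemma br01_z_scale0 X Y w : om (g0 X) (g0 Y) *: br01 H zt w = 0.
Proof.
have J := jacobi001 HH X Y w.
rewrite (br01_lift_r _ (g1_br01_0 Y w)) (br01_lift_r _ (g1_br01_0 X w)) !br01r0 // addr0 in J.
by rewrite -br01Zl // -(br01_lift_l _ (g0_br00_lift X Y)) J.
Qed.

Lemma plucker_br00_z0 ta tb tc td :
  plucker om (g0 ta) (g0 tb) (g0 tc) (g0 td) != 0 -> t ta = 0.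
Proof.
set a := g0 ta; set b := g0 tb; set c := g0 tc; set d := g0 td => P0.
have e1 := br00_z_jacobi ta tb tc; have e2 := br00_z_jacobi ta tb td.
have e3 := br00_z_jacobi tc td ta.
have X : (om a b * om c d) *: t ta = (om a d * om c b - om a c * om d b) *: t ta
                                    + (om a c * om d a - om a d * om c a) *: t tb.
  rewrite -scalerA e3 scalerBr !scalerA [om a b * om a d]mulrC [om a b * om a c]mulrC.
  by rewrite -!scalerA e1 e2 !scalerBr !scalerA scaler_subB.
have coef0 : om a c * om d a - om a d * om c a = 0.
  by rewrite (om_skew d a) (om_skew c a); ring.
rewrite coef0 scale0r addr0 in X.
apply: (scale_nz_eq0 P0).
have -> : plucker om a b c d = om a b * om c d - (om a d * om c b - om a c * om d b).
  by rewrite /plucker (om_skew c b) (om_skew d b); ring.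
by rewrite scalerBl X subrr.
Qed.

Lemma plucker_eq0 a b c d : plucker om a b c d = 0.
Proof.
apply/eqP; apply: contraT => P0.
have [ta ha] := g0_surj a; have [tb hb] := g0_surj b.
have [tc hc] := g0_surj c; have [td hd] := g0_surj d.
have t0 tx ty tu tv : plucker om (g0 tx) (g0 ty) (g0 tu) (g0 tv) = plucker om a b c d ->
    t tx = 0.
  by move=> e; apply: (@plucker_br00_z0 tx ty tu tv); rewrite e.
have tA : t ta = 0 by apply: (t0 _ tb tc td); rewrite ha hb hc hd.
have [X [oX tX]] : exists X, om a (g0 X) != 0 /\ t X = 0.
  case: (eqVneq (om a b) 0) => [ab|]; last first.
    exists tb; rewrite hb; split=> //; apply: (t0 _ ta td tc).
    by rewrite ha hb hc hd /plucker (om_skew b a) (om_skew d c); ring.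
  case: (eqVneq (om a c) 0) => [ac|]; last first.
    exists tc; rewrite hc; split=> //; apply: (t0 _ td ta tb).
    by rewrite ha hb hc hd /plucker (om_skew c a) (om_skew d b) (om_skew c b) (om_skew d a); ring.
  case: (eqVneq (om a d) 0) => [ad|]; last first.
    exists td; rewrite hd; split=> //; apply: (t0 _ tc tb ta).
    rewrite ha hb hc hd /plucker (om_skew d c) (om_skew b a) (om_skew d b).
    by rewrite (om_skew c a) (om_skew d a) (om_skew c b); ring.
  by move: P0; rewrite /plucker ab ac ad !mul0r subrr add0r eqxx.
have t_eq0 h : t h = 0.
  apply: (scale_nz_eq0 oX); have := br00_z_jacobi ta X h.
  by rewrite tA tX ha !scaler0 subrr.
move: z0; rewrite -zt_lift (proj2 (g0_ker zt)) ?eqxx //; split=> [h|w].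
  by rewrite (br00_skew HH) -/(t h) t_eq0 oppr0.
by apply: (scale_nz_eq0 oX); rewrite -ha br01_z_scale0.
Qed.
End BracketForm.
End EvenDerived.

Section OddDerived.
Variables (z : V1) (zt : W1) (B : V0 -> V1 -> F).
Hypotheses (z0 : z != 0) (zt_lift : g1 zt = z).
Hypotheses (br00_L0 : forall x x', br00 L x x' = 0) (br11_L0 : forall y y', br11 L y y' = 0)
  (br01_L : forall x y, br01 L x y = B x y *: z).

Let t h := br11 H zt h.
Let u h := br01 H h zt.

Lemma g1_br01_lift X Y : g1 (br01 H X Y) = g1 (B (g0 X) (g1 Y) *: zt).
Proof. by rewrite g1_br01 br01_L (linZ g1_lin) zt_lift. Qed.

Lemma br11_z_jacobi X Y h : B (g0 X) (g1 Y) *: t h + B (g0 X) (g1 h) *: t Y = 0.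
Proof.
have J := jacobi011 HH X Y h.
have e0 : g0 (br11 H Y h) = g0 0 by rewrite g0_br11 br11_L0 (lin0 g0_lin).
rewrite (br00_lift_r _ e0) br00r0 // (br11_lift_l _ (g1_br01_lift X Y)) in J.
rewrite (br11_lift_r _ (g1_br01_lift X h)) br11Zl // br11Zr // (br11_sym HH Y zt) in J.
by rewrite /t J.
Qed.

Lemma br01_z_jacobi h X Y : B (g0 X) (g1 Y) *: u h = B (g0 h) (g1 Y) *: u X.
Proof.
have J := jacobi001 HH h X Y.
have e0 : g0 (br00 H h X) = g0 0 by rewrite g0_br00 br00_L0 (lin0 g0_lin).
rewrite (br01_lift_l _ e0) br01l0 // add0r (br01_lift_r _ (g1_br01_lift X Y)) in J.
by rewrite (br01_lift_r _ (g1_br01_lift h Y)) !br01Zr // in J.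
Qed.

(* The coefficient 2 comes from the Jacobi identity for [(x, y, y)]. *)
Lemma pairing_minor0 : (2%:R : F) != 0 ->
  forall x x' y y', B x y * B x' y' = B x y' * B x' y.
Proof.
move=> h2 x x' y y'; apply/eqP; rewrite -subr_eq0; apply: contraT => D0.
have [xt hx] := g0_surj x; have [xt' hx'] := g0_surj x'.
have [yt hy] := g1_surj y; have [yt' hy'] := g1_surj y'.
have e1 := br01_z_jacobi xt' xt yt; have e2 := br01_z_jacobi xt' xt yt'.
rewrite hx hx' hy hy' in e1 e2.
have u_x' : u xt' = 0.
  apply: (scale_nz_eq0 D0).
  rewrite scalerBl (mulrC (B x y)) (mulrC (B x y')) -!scalerA e1 e2 !scalerA.
  by rewrite mulrC subrr.
have u_x : u xt = 0.
  by apply: (scale_nz_eq0 D0); rewrite scalerBl -!scalerA -e2 -e1 !scalerA mulrC subrr.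
have [X [Y [BXY uX]]] : exists X Y, B (g0 X) (g1 Y) != 0 /\ u X = 0.
  case: (eqVneq (B x y) 0) => [xy|]; last by exists xt, yt; rewrite hx hy.
  case: (eqVneq (B x y') 0) => [xy'|]; last by exists xt, yt'; rewrite hx hy'.
  case: (eqVneq (B x' y) 0) => [x'y|]; last by exists xt', yt; rewrite hx' hy.
  by move: D0; rewrite xy xy' !mul0r subrr eqxx.
have tY : t Y = 0.
  apply: (scale_nz_eq0 (_ : 2%:R * B (g0 X) (g1 Y) != 0)).
    by rewrite mulf_eq0 negb_or h2.
  by rewrite mulr_natl mulr2n scalerDl br11_z_jacobi.
move: z0; rewrite -zt_lift (proj2 (g1_ker zt)) ?eqxx //; split=> h.
  by apply: (scale_nz_eq0 BXY); rewrite br01_z_jacobi -/(u X) uX scaler0.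
by apply: (scale_nz_eq0 BXY); have := br11_z_jacobi X Y h; rewrite tY scaler0 addr0.
Qed.
End OddDerived.
End CentralCover.

Section Capability.
Variable F : fieldType.

Lemma capable_iso (V0 V1 U0 U1 : lmodType F) (L : liesuper V0 V1) (M : liesuper U0 U1) :
  isomorphic L M -> capable M -> capable L.
Proof.
move=> [f0 [f1 [[l0 [l1 [h00 [h01 h11]]]] [[f0' c0 c0'] [f1' c1 c1']]]]].
move=> [W0 [W1 [H [HH [g0 [g1 [[m0 [m1 [i00 [i01 i11]]]] [s0 [s1 [k0 k1]]]]]]]]]].
have inj0 := can_inj c0; have inj1 := can_inj c1.
have l0' : lin f0'.
  by move=> a u v; apply: inj0; rewrite l0 !c0'.
have l1' : lin f1'.
  by move=> a u v; apply: inj1; rewrite l1 !c1'.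
exists W0, W1, H; split=> //.
exists (fun w => f0' (g0 w)), (fun w => f1' (g1 w)); split; [|split; [|split; [|split]]].
- split; first by move=> a u v; rewrite m0 l0'.
  split; first by move=> a u v; rewrite m1 l1'.
  split; first by move=> x x'; apply: inj0; rewrite h00 !c0' i00.
  split; first by move=> x y; apply: inj1; rewrite h01 !c0' !c1' i01.
  by move=> y y'; apply: inj0; rewrite h11 !c1' c0' i11.
- by move=> v; have [w hw] := s0 (f0 v); exists w; rewrite hw c0.
- by move=> v; have [w hw] := s1 (f1 v); exists w; rewrite hw c1.
- move=> w; rewrite -k0; split => [e|->]; last exact: lin0 l0'.
  by rewrite -[g0 w]c0' e (lin0 l0).
- move=> w; rewrite -k1; split => [e|->]; last exact: lin0 l1'.
  by rewrite -[g1 w]c1' e (lin0 l1).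
Qed.

Section CocycleExtension.
Variables (U0 U1 C0 C1 : lmodType F) (M : liesuper U0 U1) (HM : is_liesuper M).
Variables (p00 : U0 -> U0 -> C0) (p01 : U0 -> U1 -> C1) (p11 : U1 -> U1 -> C0).
Hypotheses (lin_p00r : forall x, lin (p00 x)) (lin_p00l : forall x, lin (fun x' => p00 x' x))
  (lin_p01r : forall x, lin (p01 x)) (lin_p01l : forall y, lin (fun x => p01 x y))
  (lin_p11r : forall y, lin (p11 y)) (lin_p11l : forall y, lin (fun y' => p11 y' y)).
Hypotheses (p00_skew : forall x x', p00 x x' = - p00 x' x)
  (p11_sym : forall y y', p11 y y' = p11 y' y).
Hypotheses
  (cocycle000 : forall x y z, p00 x (br00 M y z) = p00 (br00 M x y) z + p00 y (br00 M x z))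
  (cocycle001 : forall x y z, p01 x (br01 M y z) = p01 (br00 M x y) z + p01 y (br01 M x z))
  (cocycle011 : forall x y z, p00 x (br11 M y z) = p11 (br01 M x y) z + p11 y (br01 M x z))
  (cocycle111 : forall y z w,
     p01 (br11 M y z) w + p01 (br11 M z w) y + p01 (br11 M w y) z = 0).
Hypotheses
  (nondeg0 : forall x, (forall x', br00 M x x' = 0 /\ p00 x x' = 0) ->
                       (forall y, br01 M x y = 0 /\ p01 x y = 0) -> x = 0)
  (nondeg1 : forall w, (forall x, br01 M x w = 0 /\ p01 x w = 0) ->
                       (forall y, br11 M w y = 0 /\ p11 w y = 0) -> w = 0).

Definition cocycle_ext : liesuper (U0 * C0)%type (U1 * C1)%type :=
  LieSuper (fun a b => (br00 M a.1 b.1, p00 a.1 b.1))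
           (fun a b => (br01 M a.1 b.1, p01 a.1 b.1))
           (fun a b => (br11 M a.1 b.1, p11 a.1 b.1)).

Lemma is_liesuper_cocycle_ext : is_liesuper cocycle_ext.
Proof.
case: HM => l1 [l2 [l3 [l4 [l5 [l6 [s1 [s2 [j1 [j2 [j3 j4]]]]]]]]]].
split; first by move=> x a u v; rewrite /= l1 lin_p00r.
split; first by move=> x a u v; rewrite /= l2 lin_p00l.
split; first by move=> x a u v; rewrite /= l3 lin_p01r.
split; first by move=> x a u v; rewrite /= l4 lin_p01l.
split; first by move=> x a u v; rewrite /= l5 lin_p11r.
split; first by move=> x a u v; rewrite /= l6 lin_p11l.
split; first by move=> x x'; rewrite /= s1 p00_skew.
split; first by move=> x x'; rewrite /= s2 p11_sym.
split; first by move=> x y z; rewrite /= j1 cocycle000.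
split; first by move=> x y z; rewrite /= j2 cocycle001.
split; first by move=> x y z; rewrite /= j3 cocycle011.
by move=> x y z; apply: injective_projections => /=; [exact: j4 | exact: cocycle111].
Qed.

(* The nondegeneracy hypotheses say that the centre of [cocycle_ext] is exactly [0 * C],
   the kernel of the first projection. *)
Lemma capable_of_cocycle : capable M.
Proof.
exists (U0 * C0)%type, (U1 * C1)%type, cocycle_ext; split; first exact: is_liesuper_cocycle_ext.
exists fst, fst; split; [|split; [|split; [|split]]].
- by do 3?split.
- by move=> v; exists (v, 0).
- by move=> v; exists (v, 0).
- case=> x c /=; split.
    move->; split => [[x' c']|[y d]] /=.
      by rewrite (lin0 (lin_br00l HM _)) (lin0 (lin_p00l _)).
    by rewrite (lin0 (lin_br01l HM _)) (lin0 (lin_p01l _)).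
  move=> [h1 h2]; apply: nondeg0.
    by move=> x'; have := h1 (x', 0); case.
  by move=> y; have := h2 (y, 0); case.
- case=> w d /=; split.
    move->; split => [[x' c']|[y e]] /=.
      by rewrite (lin0 (lin_br01r HM _)) (lin0 (lin_p01r _)).
    by rewrite (lin0 (lin_br11l HM _)) (lin0 (lin_p11l _)).
  move=> [h1 h2]; apply: nondeg1.
    by move=> x'; have := h1 (x', 0); case.
  by move=> y; have := h2 (y, 0); case.
Qed.
End CocycleExtension.
End Capability.

Section Models.
Variable F : fieldType.

Lemma is_liesuper_dsum (V0 V1 W0 W1 : lmodType F) (L : liesuper V0 V1) (M : liesuper W0 W1) :
  is_liesuper L -> is_liesuper M -> is_liesuper (dsum L M).
Proof.
case=> l1 [l2 [l3 [l4 [l5 [l6 [s1 [s2 [j1 [j2 [j3 j4]]]]]]]]]].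
case=> m1 [m2 [m3 [m4 [m5 [m6 [t1 [t2 [i1 [i2 [i3 i4]]]]]]]]]].
split; first by move=> x a u v; rewrite /= l1 m1.
split; first by move=> x a u v; rewrite /= l2 m2.
split; first by move=> x a u v; rewrite /= l3 m3.
split; first by move=> x a u v; rewrite /= l4 m4.
split; first by move=> x a u v; rewrite /= l5 m5.
split; first by move=> x a u v; rewrite /= l6 m6.
split; first by move=> x x'; rewrite /= s1 t1.
split; first by move=> x x'; rewrite /= s2 t2.
split; first by move=> x y z; rewrite /= j1 i1.
split; first by move=> x y z; rewrite /= j2 i2.
split; first by move=> x y z; rewrite /= j3 i3.
by move=> x y z; apply: injective_projections => /=; [exact: j4 | exact: i4].
Qed.

Lemma is_liesuper_Aab m n : is_liesuper (Aab F m n).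
Proof.
do 6 (split; first by move=> x a u v; rewrite /= scaler0 addr0).
do 2 (split; first by move=> *; rewrite /= ?oppr0).
do 3 (split; first by move=> *; rewrite /= addr0).
by move=> *; rewrite /= !addr0.
Qed.

Definition heis_x : 'I_(1 + 1 + 1) := @Hx 1 ord0.
Definition heis_y : 'I_(1 + 1 + 1) := @Hxm 1 ord0.
Definition heis_z : 'I_(1 + 1 + 1) := Hz 1.

Definition heis_form (u v : 'rV[F]_(1 + 1 + 1)) :=
  u ord0 heis_x * v ord0 heis_y - u ord0 heis_y * v ord0 heis_x.

Lemma Heis1_br00 u v : br00 (Heis F 1 0) u v = heis_form u v *: delta_mx ord0 heis_z.
Proof. by rewrite /= big_ord1. Qed.

Lemma Heis1_br11 y y' : br11 (Heis F 1 0) y y' = 0.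
Proof. by rewrite /= big_ord0 scale0r. Qed.

Lemma heis_form_zr u c : heis_form u (c *: delta_mx ord0 heis_z) = 0.
Proof. by rewrite /heis_form !mxE /= !mulr0 subrr. Qed.

Lemma heis_form_zl u c : heis_form (c *: delta_mx ord0 heis_z) u = 0.
Proof. by rewrite /heis_form !mxE /= !mulr0 !mul0r subrr. Qed.

Lemma is_liesuper_Heis : is_liesuper (Heis F 1 0).
Proof.
do 2 (split; first by move=> x a u v; rewrite !Heis1_br00 scalerA -scalerDl /heis_form !mxE;
  congr (_ *: _); ring).
do 2 (split; first by move=> x a u v; rewrite /= scaler0 addr0).
do 2 (split; first by move=> x a u v; rewrite !Heis1_br11 scaler0 addr0).
split; first by move=> x x'; rewrite !Heis1_br00 -scaleNr /heis_form; congr (_ *: _); ring.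
split; first by move=> *; rewrite !Heis1_br11.
split; first by move=> x y z; rewrite !Heis1_br00 !heis_form_zr heis_form_zl !scale0r addr0.
split; first by move=> *; rewrite /= addr0.
split; first by move=> x y z;
  rewrite !Heis1_br11 Heis1_br00 /heis_form !mxE !mulr0 subrr scale0r addr0.
by move=> *; rewrite /= !addr0.
Qed.

Definition hm_y : 'I_(1 + 1) := lshift 1 (@ord0 0).
Definition hm_z : 'I_(1 + 1) := rshift 1 (@ord0 0).

Lemma Hm1_br01 (u : 'rV[F]_1) (w : 'rV[F]_(1 + 1)) :
  br01 (Hm F 1) u w = (u ord0 ord0 * w ord0 hm_y) *: delta_mx ord0 hm_z.
Proof. by rewrite /= big_ord1. Qed.

Lemma is_liesuper_Hm : is_liesuper (Hm F 1).
Proof.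
do 2 (split; first by move=> x a u v; rewrite /= scaler0 addr0).
do 2 (split; first by move=> x a u v; rewrite !Hm1_br01 scalerA -scalerDl !mxE;
  congr (_ *: _); ring).
do 2 (split; first by move=> x a u v; rewrite /= scaler0 addr0).
split; first by move=> *; rewrite /= oppr0.
split; first by [].
split; first by move=> *; rewrite /= addr0.
split; first by move=> x y z; rewrite !Hm1_br01 !mxE /= !mulr0 !mul0r !scale0r addr0.
split; first by move=> *; rewrite /= addr0.
by move=> *; rewrite !Hm1_br01 !mxE !mul0r !scale0r !addr0.
Qed.
End Models.

Ltac cocycle_solve :=
  move=> *; try move=> a u v; rewrite /= ?big_ord0 ?big_ord1 ?scale0r /heis_form /=;
  repeat (apply: injective_projections => /=); apply/rowP => i; rewrite !mxE /=; try ring.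

Section CapableHeis.
Variables (F : fieldType) (p q : nat).
Local Notation U0 := ('rV[F]_(1 + 1 + 1) * 'rV[F]_p)%type.
Local Notation U1 := ('rV[F]_0 * 'rV[F]_q)%type.

(* For central [x'] the bracket with [y] kills the [x]-coordinate of [x'], and then
   pairing with [x] gives back [x'] itself. *)
Local Notation heis_cocycle00 := (fun x x' : U0 =>
  (x'.1 ord0 heis_x *: x - x.1 ord0 heis_x *: x', 0 : 'rV[F]_q)).
Local Notation odd_cocycle := (fun y y' : U1 =>
  (0 : U0, \row_j (y.2 ord0 j * y'.2 ord0 j) : 'rV[F]_q)).

Lemma capable_Heis_Aab : capable (dsum (Heis F 1 0) (Aab F p q)).
Proof.
apply: (@capable_of_cocycle F _ _ _ _ _
  (is_liesuper_dsum (is_liesuper_Heis F) (is_liesuper_Aab F p q))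
  heis_cocycle00 (fun _ _ => 0 : 'rV[F]_1) odd_cocycle); try by cocycle_solve.
- move=> x central_x _.
  have [_ /(congr1 fst) /= e1] := central_x (delta_mx ord0 heis_x, 0).
  have [/(congr1 (fun r : U0 => r.1 ord0 heis_z)) e2 _] := central_x (delta_mx ord0 heis_y, 0).
  move: e2; rewrite /= big_ord1 !mxE /= !mulr1 mulr0 subr0 => x1.
  by move: e1; rewrite x1 mxE /= scale0r subr0 scale1r.
- move=> w _ central_w; apply: injective_projections; first by rewrite thinmx0.
  apply/rowP => j; have [_ /(congr1 (fun r : U0 * 'rV[F]_q => r.2 ord0 j))] :=
    central_w (0, delta_mx ord0 j).
  by rewrite /= !mxE !eqxx mulr1.
Qed.
End CapableHeis.

Section CapableHm.
Variables (F : fieldType) (p q : nat).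
Local Notation U0 := ('rV[F]_1 * 'rV[F]_p)%type.
Local Notation U1 := ('rV[F]_(1 + 1) * 'rV[F]_q)%type.

Local Notation hm_cocycle00 := (fun x x' : U0 =>
  (x'.1 ord0 ord0 *: x - x.1 ord0 ord0 *: x', 0 : 'rV[F]_q)).
(* Detects the [z]-coordinate of odd elements, which [[x, -]] does not see. *)
Local Notation hm_cocycle01 := (fun (x : U0) (w : U1) =>
  \row_(i < 1) (x.1 ord0 ord0 * w.1 ord0 hm_z)).
Local Notation odd_cocycle := (fun y y' : U1 =>
  (0 : U0, \row_j (y.2 ord0 j * y'.2 ord0 j) : 'rV[F]_q)).

Lemma capable_Hm_Aab : capable (dsum (Hm F 1) (Aab F p q)).
Proof.
apply: (@capable_of_cocycle F _ _ _ _ _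
  (is_liesuper_dsum (is_liesuper_Hm F) (is_liesuper_Aab F p q))
  hm_cocycle00 hm_cocycle01 odd_cocycle); try by cocycle_solve.
- move=> x central0_x central1_x.
  have [/(congr1 (fun r : U1 => r.1 ord0 hm_z)) e2 _] := central1_x (delta_mx ord0 hm_y, 0).
  have [_ /(congr1 fst) /= e1] := central0_x (delta_mx ord0 ord0, 0).
  move: e2; rewrite /= big_ord1 !mxE /= !mulr1 => x1.
  by move: e1; rewrite x1 mxE /= scale0r subr0 scale1r.
- move=> w central0_w central1_w.
  have [/(congr1 (fun r : U1 => r.1 ord0 hm_z)) e1
        /(congr1 (fun r : 'rV[F]_1 => r ord0 ord0)) e2] := central0_w (delta_mx ord0 ord0, 0).
  move: e1 e2; rewrite /= big_ord1 !mxE /= !mul1r mulr1 => wy wz.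
  apply: injective_projections.
    apply/rowP => i; rewrite mxE.
    have [->|->] : i = hm_y \/ i = hm_z.
      by case: i => [[|[|k]] Hk]; [left; exact: val_inj | right; exact: val_inj | ].
    + exact: wy.
    + exact: wz.
  apply/rowP => j; have [_ /(congr1 (fun r : U0 * 'rV[F]_q => r.2 ord0 j))] :=
    central1_w (0, delta_mx ord0 j).
  by rewrite /= !mxE !eqxx mulr1.
Qed.
End CapableHm.

Section NormalForms.
Variables (F : fieldType) (V0 V1 : vectType F) (L : liesuper V0 V1) (k l : nat).
Hypotheses (dimV0 : \dim (fullv : {vspace V0}) = k) (dimV1 : \dim (fullv : {vspace V1}) = l).

Lemma lin_iso_rV (V : vectType F) n : \dim (fullv : {vspace V}) = n ->
  exists Phi : V -> 'rV[F]_0 * 'rV[F]_n, lin Phi /\ bijective Phi.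
Proof.
move=> dimV; have zero_lin (i : 'I_0) : flin (fun _ : V => 0 : F).
  by move=> a u v; rewrite scaler0 addr0.
have zero_dual (i j : 'I_0) : 0 = (i == j)%:R :> F by case: i.
have [Phi [Phi_lin Phi_bij _ _]] :=
  @dual_coord_iso F V 0 (fun _ => 0) (fun _ _ => 0) zero_lin zero_dual n (esym dimV).
by exists Phi.
Qed.

Lemma isomorphic_Heis_Aab (xs : 'I_(1 + 1 + 1) -> V0) (fs : 'I_(1 + 1 + 1) -> V0 -> F) :
  (forall i, flin (fs i)) -> (forall i j, fs i (xs j) = (i == j)%:R) ->
  (forall a b, br00 L a b = (fs heis_x a * fs heis_y b - fs heis_y a * fs heis_x b)
                            *: xs heis_z) ->
  (forall x y, br01 L x y = 0) -> (forall y y', br11 L y y' = 0) ->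
  isomorphic L (dsum (Heis F 1 0) (Aab F (k - 3) l)).
Proof.
move=> fs_lin fs_dual br00_L br01_L br11_L.
have dim3 : (3 + (k - 3))%N = \dim (fullv : {vspace V0}).
  by rewrite dimV0 subnKC // -dimV0 (dual_family_le_dim fs_lin fs_dual).
have [P0 [P0_lin P0_bij P0_coord P0_dual]] := dual_coord_iso fs_lin fs_dual dim3.
have [P1 [P1_lin P1_bij]] := lin_iso_rV dimV1.
exists P0, P1; do !split=> //.
- move=> a b; rewrite br00_L (linZ P0_lin) P0_dual.
  by apply: injective_projections; rewrite /= ?scaler0 // big_ord1 !P0_coord.
- by move=> a y; rewrite br01_L (lin0 P1_lin).
- by move=> y y'; rewrite br11_L (lin0 P0_lin); apply: injective_projections;
    rewrite /= ?big_ord0 ?scale0r.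
Qed.

Lemma isomorphic_Hm_Aab (x0 : V0) (f0 : V0 -> F)
    (ys : 'I_(1 + 1) -> V1) (gs : 'I_(1 + 1) -> V1 -> F) :
  flin f0 -> f0 x0 = 1 ->
  (forall i, flin (gs i)) -> (forall i j, gs i (ys j) = (i == j)%:R) ->
  (forall x y, br01 L x y = (f0 x * gs hm_y y) *: ys hm_z) ->
  (forall x x', br00 L x x' = 0) -> (forall y y', br11 L y y' = 0) ->
  isomorphic L (dsum (Hm F 1) (Aab F (k - 1) (l - 2))).
Proof.
move=> f0_lin f0x0 gs_lin gs_dual br01_L br00_L br11_L.
have f0_dual : forall i j : 'I_1, (fun=> f0) i ((fun=> x0) j) = (i == j)%:R.
  by move=> i j; rewrite !ord1 eqxx.
have dim1 : (1 + (k - 1))%N = \dim (fullv : {vspace V0}).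
  by rewrite dimV0 subnKC // -dimV0 (@dual_family_le_dim _ _ _ _ (fun=> f0) (fun=> f0_lin) f0_dual).
have dim2 : (2 + (l - 2))%N = \dim (fullv : {vspace V1}).
  by rewrite dimV1 subnKC // -dimV1 (dual_family_le_dim gs_lin gs_dual).
have [P0 [P0_lin P0_bij P0_coord _]] := dual_coord_iso (fun=> f0_lin) f0_dual dim1.
have [P1 [P1_lin P1_bij P1_coord P1_dual]] := dual_coord_iso gs_lin gs_dual dim2.
exists P0, P1; do !split=> //.
- by move=> a b; rewrite br00_L (lin0 P0_lin).
- move=> a w; rewrite br01_L (linZ P1_lin) P1_dual /= big_ord1 P0_coord P1_coord.
  by apply: injective_projections; rewrite /= ?scaler0.
- by move=> y y'; rewrite br11_L (lin0 P0_lin).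
Qed.
End NormalForms.

Section Classification.
Variables (F : fieldType) (V0 V1 : vectType F) (L : liesuper V0 V1) (k l : nat).
Variables (D0 : {vspace V0}) (D1 : {vspace V1}).
Hypotheses (h2 : (2%:R : F) != 0) (HL : is_liesuper L) (nilL : nilpotent L).
Hypotheses (capL : capable L) (derL : is_derived L D0 D1).
Hypotheses (dimV0 : \dim (fullv : {vspace V0}) = k) (dimV1 : \dim (fullv : {vspace V1}) = l).

Lemma br00_derived x x' : br00 L x x' \in D0. Proof. by case: derL => -[]. Qed.
Lemma br11_derived y y' : br11 L y y' \in D0. Proof. by case: derL => -[_ []]. Qed.
Lemma br01_derived x y : br01 L x y \in D1. Proof. by case: derL => -[_ []]. Qed.

Lemma derived_abelian :
  (forall x x', br00 L x x' = 0) -> (forall y y', br11 L y y' = 0) ->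
  (forall x y, br01 L x y = 0) -> \dim D0 = 0%N /\ \dim D1 = 0%N.
Proof.
move=> br00_0 br11_0 br01_0; case: derL => _ /(_ 0%VS 0%VS) [].
- by do !split=> *; rewrite ?br00_0 ?br11_0 ?br01_0 mem0v.
- by move=> /dimvS + /dimvS; rewrite !dimv0 !leqn0 => /eqP-> /eqP->.
Qed.

Section EvenCase.
Variables (z : V0) (c : V0 -> F).
Hypotheses (h3 : (3%:R : F) != 0) (dimD0 : \dim D0 = 1%N) (dimD1 : \dim D1 = 0%N).
Hypotheses (z0 : z != 0) (c_lin : flin c) (D0_line : forall w, w \in D0 -> w = c w *: z).

Local Notation om := (fun u v => c (br00 L u v)).

Lemma even_br01 x y : br01 L x y = 0.
Proof. exact: dimv0_mem dimD1 _ (br01_derived x y). Qed.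

Lemma even_br00 x x' : br00 L x x' = om x x' *: z.
Proof. exact: D0_line (br00_derived x x'). Qed.

Lemma even_br11 y y' : br11 L y y' = 0.
Proof.
have [W0 [W1 [H [HH [g0 [g1 [g_hom [g0_surj [g1_surj [g0_ker g1_ker]]]]]]]]]] := capL.
have [zt zt_lift] := g0_surj z.
have br11_L w w' : br11 L w w' = c (br11 L w w') *: z by apply: D0_line; apply: br11_derived.
have diag0 := br11_diag_coeff0 HH g_hom g1_surj g0_ker g1_ker z0 zt_lift
  even_br01 h3 br11_L.
(* Polarization: [(y + y', y + y')] expands to [2 [y, y']]. *)
have := br11_L (y + y') (y + y'); rewrite diag0 scale0r.
rewrite br11Dl // !br11Dr // (br11_L y y) (br11_L y' y') !diag0 !scale0r add0r addr0.
rewrite (br11_sym HL y' y) -mulr2n -scaler_nat.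
exact: scale_nz_eq0.
Qed.

Lemma even_om_skew x x' : om x x' = - om x' x.
Proof. by rewrite /= (br00_skew HL) (flinN c_lin). Qed.

Lemma even_om_linr x : flin (om x).
Proof. by move=> a u v; rewrite /= (lin_br00r HL x a u v) c_lin. Qed.

Lemma even_om_linl x : flin (om^~ x).
Proof. by move=> a u v; rewrite /= (lin_br00l HL x a u v) c_lin. Qed.

Lemma even_om_diag x : om x x = 0.
Proof.
have /eqP := even_om_skew x x.
by rewrite -addr_eq0 -mulr2n -mulr_natl mulf_eq0 (negPf h2) => /eqP.
Qed.

Lemma even_om_z x : om z x = 0.
Proof.
apply: (@nilpotent_eigenvalue0 _ _ _ L HL (z, 0) (x, 0)) => //.
  by apply: contra_neq z0 => /(congr1 fst).
rewrite /brp /= {1}even_br00 br11r0 // !br01r0 // addr0 subr0.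
by apply: injective_projections; rewrite /= ?scaler0.
Qed.

Lemma even_om_plucker a b c' d : plucker om a b c' d = 0.
Proof.
have [W0 [W1 [H [HH [g0 [g1 [g_hom [g0_surj [g1_surj [g0_ker g1_ker]]]]]]]]]] := capL.
have [zt zt_lift] := g0_surj z.
exact: (plucker_eq0 HH g_hom g0_surj g0_ker g1_ker z0 zt_lift even_br01 even_br00
  even_om_skew).
Qed.

Lemma even_om_neq0 : exists u v, om u v != 0.
Proof.
apply: NNPP => om0; suff: \dim D0 = 0%N by rewrite dimD0.
apply: proj1 (derived_abelian _ even_br11 even_br01) => u v.
rewrite even_br00; apply/eqP; rewrite scaler_eq0; apply/orP; left.
by apply/negPn/negP => uv; apply: om0; exists u, v.
Qed.

(* With [om = f1 /\ f2] and [f1 u = f2 x2 = 1], the vectors [u, x2, z] and forms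
   [f1, f2, f3] form the dual bases of the Heisenberg coordinates [x, y, z]. *)
Lemma even_case_iso : isomorphic L (dsum (Heis F 1 0) (Aab F (k - 3) l)).
Proof.
have [u [v uv]] := even_om_neq0.
have [x2 [ux2 om_split]] := plucker_decomposable even_om_linr even_om_skew even_om_plucker uv.
pose f1 w := om w x2; pose f2 w := om u w.
have f1z : f1 z = 0 by rewrite /f1 even_om_z.
have f2z : f2 z = 0 by rewrite /f2 even_om_skew even_om_z oppr0.
pose xs2 (i : 'I_2) := nth u [:: u; x2] i; pose fs2 (i : 'I_2) := nth f1 [:: f1; f2] i.
have fs2_lin i : flin (fs2 i).
  by case: i => [[|[|i]] Hi] //; [apply: even_om_linl | apply: even_om_linr].
have fs2_dual i j : fs2 i (xs2 j) = (i == j)%:R.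
  by case: i j => [[|[|i]] Hi] [[|[|j]] Hj] //; rewrite /fs2 /xs2 /f1 /f2 /= ?even_om_diag.
have fs2z i : fs2 i z = 0 by case: i => [[|[|i]] Hi] //; rewrite /fs2 /=.
have [f3 [f3_lin f3z f3x]] := dual_family_extend fs2_lin fs2_dual z0 fs2z.
have f3u : f3 u = 0 by apply: (f3x ord0).
have f3x2 : f3 x2 = 0 by apply: (f3x (@Ordinal 2 1 isT)).
pose xs (i : 'I_(1 + 1 + 1)) := nth u [:: u; x2; z] i.
pose fs (i : 'I_(1 + 1 + 1)) := nth f1 [:: f1; f2; f3] i.
apply: (@isomorphic_Heis_Aab _ _ _ L k l dimV0 dimV1 xs fs _ _ _ even_br01 even_br11).
- by case=> [[|[|[|i]]] Hi] //; [apply: even_om_linl | apply: even_om_linr].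
- by case=> [[|[|[|i]]] Hi] [[|[|[|j]]] Hj] //;
    rewrite /fs /xs /f1 /f2 /= ?even_om_diag ?even_om_z ?f3u ?f3x2 ?f3z.
- by move=> a b; rewrite even_br00 om_split.
Qed.
End EvenCase.

Section OddCase.
Variables (z : V1) (c : V1 -> F).
Hypotheses (dimD0 : \dim D0 = 0%N) (dimD1 : \dim D1 = 1%N).
Hypotheses (z0 : z != 0) (c_lin : flin c) (D1_line : forall w, w \in D1 -> w = c w *: z).

Local Notation B := (fun x y => c (br01 L x y)).

Lemma odd_br00 x x' : br00 L x x' = 0.
Proof. exact: dimv0_mem dimD0 _ (br00_derived x x'). Qed.

Lemma odd_br11 y y' : br11 L y y' = 0.
Proof. exact: dimv0_mem dimD0 _ (br11_derived y y'). Qed.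

Lemma odd_br01 x y : br01 L x y = B x y *: z.
Proof. exact: D1_line (br01_derived x y). Qed.

Lemma odd_B_linl y : flin (B^~ y).
Proof. by move=> a u v; rewrite /= (lin_br01l HL y a u v) c_lin. Qed.

Lemma odd_B_linr x : flin (B x).
Proof. by move=> a u v; rewrite /= (lin_br01r HL x a u v) c_lin. Qed.

Lemma odd_B_z x : B x z = 0.
Proof.
apply/eqP; rewrite -oppr_eq0; apply/eqP.
apply: (@nilpotent_eigenvalue0 _ _ _ L HL (0, z) (x, 0)) => //.
  by apply: contra_neq z0 => /(congr1 snd).
rewrite /brp /= odd_br00 odd_br11 br01r0 // {1}odd_br01 addr0 sub0r.
by apply: injective_projections; rewrite /= ?scaler0 ?scaleNr.
Qed.

Lemma odd_B_minor x x' y y' : B x y * B x' y' = B x y' * B x' y.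
Proof.
have [W0 [W1 [H [HH [g0 [g1 [g_hom [g0_surj [g1_surj [g0_ker g1_ker]]]]]]]]]] := capL.
have [zt zt_lift] := g1_surj z.
exact: (pairing_minor0 HH g_hom g0_surj g1_surj g0_ker g1_ker z0 zt_lift odd_br00 odd_br11
  odd_br01 h2).
Qed.

Lemma odd_B_neq0 : exists x y, B x y != 0.
Proof.
apply: NNPP => B0; suff: \dim D1 = 0%N by rewrite dimD1.
apply: proj2 (derived_abelian odd_br00 odd_br11 _) => x y.
rewrite odd_br01; apply/eqP; rewrite scaler_eq0; apply/orP; left.
by apply/negPn/negP => xy; apply: B0; exists x, y.
Qed.

(* [B] factors as [f (x) g (y)] with [f x0 = g y1 = 1]; [y1, z] and [g, h] are the dual bases
   of the odd coordinates [y, z] of [H_1]. *)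
Lemma odd_case_iso : isomorphic L (dsum (Hm F 1) (Aab F (k - 1) (l - 2))).
Proof.
have [x0 [y0 B00]] := odd_B_neq0; pose y1 := (B x0 y0)^-1 *: y0.
have B01 : B x0 y1 = 1 by rewrite /y1 (flinZ (odd_B_linr x0)) mulVf.
pose f x := B x y1; pose g y := B x0 y.
have B_split x y : B x y = f x * g y by rewrite /f /g -odd_B_minor B01 mulr1.
have g_dual (i j : 'I_1) : g y1 = (i == j)%:R by rewrite !ord1 eqxx.
have [h [h_lin hz hy1]] := @dual_family_extend _ _ 1 (fun=> y1) (fun=> g)
  (fun=> odd_B_linr x0) g_dual z z0 (fun=> odd_B_z x0).
pose ys (i : 'I_(1 + 1)) := nth y1 [:: y1; z] i.
pose gs (i : 'I_(1 + 1)) := nth g [:: g; h] i.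
apply: (@isomorphic_Hm_Aab _ _ _ L k l dimV0 dimV1 x0 f ys gs (odd_B_linl y1) B01
  _ _ _ odd_br00 odd_br11).
- by case=> [[|[|i]] Hi] //; apply: odd_B_linr.
- by case=> [[|[|i]] Hi] [[|[|j]] Hj] //; rewrite /gs /ys /g /= ?B01 ?odd_B_z ?(hy1 ord0).
- by move=> x y; rewrite odd_br01 B_split.
Qed.
End OddCase.
End Classification.

Lemma prime_natr_neq0 (F : fieldType) p : prime p -> p \notin [pchar F] -> p%:R != 0 :> F.
Proof. by move=> p_pr; apply: contra => p0; rewrite inE p_pr p0. Qed.

Unset Implicit Arguments. Set Strict Implicit.

Theorem mainTheorem1 (F : fieldType) (V0 V1 : vectType F)
    (L : liesuper V0 V1) (k l r s : nat) :
  ~~ (2%N \in [pchar F]) -> ~~ (3%N \in [pchar F]) ->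
  is_liesuper L -> nilpotent L ->
  \dim (fullv : {vspace V0}) = k -> \dim (fullv : {vspace V1}) = l ->
  (exists (D0 : {vspace V0}) (D1 : {vspace V1}),
      is_derived L D0 D1 /\ \dim D0 = r /\ \dim D1 = s) ->
  (r + s = 1)%N ->
  capable L <->
  (isomorphic L (dsum (Heis F 1 0) (Aab F (k - 3) l)) \/
   isomorphic L (dsum (Hm F 1) (Aab F (k - 1) (l - 2)))).
Proof.
move=> not_pchar2 not_pchar3 HL nilL dimV0 dimV1 [D0 [D1 [derL [dimD0 dimD1]]]] rs.
have h2 := prime_natr_neq0 (isT : prime 2) not_pchar2.
have h3 := prime_natr_neq0 (isT : prime 3) not_pchar3.
split=> [capL|]; last first.
  by case=> iso; apply: (capable_iso iso); [apply: capable_Heis_Aab | apply: capable_Hm_Aab].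
case: r s rs dimD0 dimD1 => [|[|r]] [|[|s]] //= _ dimD0 dimD1.
- right; have [z [c [z0 c_lin D1_line]]] := dimv1_coord dimD1.
  exact: (odd_case_iso h2 HL nilL capL derL dimV0 dimV1 dimD0 dimD1 z0 c_lin D1_line).
- left; have [z [c [z0 c_lin D0_line]]] := dimv1_coord dimD0.
  exact: (even_case_iso h2 HL nilL capL derL dimV0 dimV1 h3 dimD0 dimD1 z0 c_lin D0_line).
Qed.
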